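(* Let $k\ge0$, $\ell=2k$, and let $G=(X\cup Y,E)$ be a bipartite graph without isolated vertices, with a linear order $<_X$ of $X$ listing $X$ as $x_1,\dots,x_{|X|}$. If $e=\{x_p,y\}$ and $f=\{x_q,y'\}$ are distinct edges with $p+\ell<q$, then in every 2-layer $k$-planar drawing $(<_X,<_Y)$ of $G$ (with this $<_X$) it holds that $y<_Yy'$ or $y=y'$.
   Context: A 2-layer drawing of a bipartite graph $G=(X\cup Y,E)$ ($X\cap Y=\emptyset$, $E\subseteq X\times Y$) is a pair $(<_X,<_Y)$ of strict linear orders on $X$ and $Y$. Edges $\{x,y\},\{x',y'\}$ with $x\ne x'\in X$, $y\ne y'\in Y$ cross if $x<_Xx'$ and $y'<_Yy$. The drawing is $k$-planar if every edge crosses at most $k$ edges. *)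

From mathcomp Require Import all_boot all_order.
Set Implicit Arguments. Unset Strict Implicit. Unset Printing Implicit Defensive.

Definition strict_linear_order (T : finType) (r : rel T) : Prop :=
  irreflexive r /\ transitive r /\ (forall x y, x != y -> r x y || r y x).

Definition no_isolated (X Y : finType) (E : {set X * Y}) : Prop :=
  (forall x : X, exists y : Y, (x, y) \in E) /\
  (forall y : Y, exists x : X, (x, y) \in E).

(* Position (0-based) of x in the listing of X by ltX. *)
Definition pos (X : finType) (ltX : rel X) (x : X) : nat :=
  #|[set z | ltX z x]|.

Definition cross (X Y : finType) (ltX : rel X) (ltY : rel Y) (e f : X * Y) : bool :=
  (ltX e.1 f.1 && ltY f.2 e.2) || (ltX f.1 e.1 && ltY e.2 f.2).

Definition kplanar_drawing (X Y : finType) (E : {set X * Y})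
    (ltX : rel X) (ltY : rel Y) (k : nat) : Prop :=
  strict_linear_order ltX /\ strict_linear_order ltY /\
  forall e, e \in E -> #|[set f in E | cross ltX ltY e f]| <= k.

From mathcomp Require Import all_boot all_order.
From mathcomp Require Import zify.

Set Implicit Arguments.
Unset Strict Implicit.
Unset Printing Implicit Defensive.

(* If y' <_Y y, the edges e and f cross each other, and for each of the at
   least 2k vertices x strictly between x_p and x_q, any edge at x crosses e
   or f.  So e and f together have at least 2k + 2 crossings, and one of
   them has more than k. *)

Definition between (X : finType) (ltX : rel X) (a b : X) : {set X} :=
  [set x | ltX a x && ltX x b].

Definition crossings (X Y : finType) (E : {set X * Y}) (ltX : rel X)
    (ltY : rel Y) (e : X * Y) : {set X * Y} :=
  [set f in E | cross ltX ltY e f].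

Lemma crossC (X Y : finType) (ltX : rel X) (ltY : rel Y) (e f : X * Y) :
  cross ltX ltY e f = cross ltX ltY f e.
Proof. exact: orbC. Qed.

Lemma strict_linear_order_lt_total (T : finType) (r : rel T) (a b : T) :
  strict_linear_order r -> ~~ r a b -> a != b -> r b a.
Proof. by move=> [_ [_ total]] nab /total; rewrite (negbTE nab). Qed.

Section Positions.

Variables (X : finType) (ltX : rel X).
Hypothesis ltX_order : strict_linear_order ltX.

Lemma pos_le (a b : X) : ltX a b -> pos ltX a <= pos ltX b.
Proof.
case: ltX_order => [_ [trX _]] ltab.
by apply: subset_leq_card; apply/subsetP => z; rewrite !inE => /trX; apply.
Qed.

Lemma lt_of_pos_lt (a b : X) : pos ltX a < pos ltX b -> ltX a b.
Proof.
move=> lt_pos; apply/negPn/negP => nab.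
have neq_ab : a != b by apply: contraTneq lt_pos => ->; rewrite ltnn.
have := pos_le (strict_linear_order_lt_total ltX_order nab neq_ab).
by rewrite leqNgt lt_pos.
Qed.

Lemma pos_le_between (a b : X) :
  pos ltX b <= pos ltX a + #|between ltX a b| + 1.
Proof.
case: ltX_order => [_ [_ total]].
have sub : [set z | ltX z b] \subset
           [set z | ltX z a] :|: between ltX a b :|: [set a].
  apply/subsetP => z; rewrite !inE => zb.
  case: (eqVneq z a) => [-> | /total /orP[-> | ->]]; rewrite ?zb ?orbT //.
apply: leq_trans (subset_leq_card sub) _.
apply: leq_trans (leq_card_setU _ _) _; rewrite cards1 leq_add2r.
exact: leq_card_setU.
Qed.

End Positions.

Section Crossings.

Variables (X Y : finType) (E : {set X * Y}) (ltX : rel X) (ltY : rel Y).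
Hypotheses (ltX_irr : irreflexive ltX) (ltY_order : strict_linear_order ltY).

Lemma cross_between (xp x xq : X) (y y' z : Y) :
  ltX xp x -> ltX x xq -> ltY y' y ->
  cross ltX ltY (xp, y) (x, z) || cross ltX ltY (xq, y') (x, z).
Proof.
case: ltY_order => [_ [trY totY]] px xq' y'y.
rewrite /cross /= px xq' /=.
case: (eqVneq z y) => [-> | /totY /orP[-> | yz]]; rewrite ?y'y ?orbT //.
by rewrite (trY _ _ _ y'y yz) !orbT.
Qed.

Lemma crossings_between (xp xq : X) (y y' : Y) :
  (forall x, exists z, (x, z) \in E) ->
  (xp, y) \in E -> (xq, y') \in E -> ltX xp xq -> ltY y' y ->
  #|between ltX xp xq| + 2 <=
    #|crossings E ltX ltY (xp, y)| + #|crossings E ltX ltY (xq, y')|.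
Proof.
move=> /fin_all_exists[g gE] eE fE pq y'y.
have ef : cross ltX ltY (xp, y) (xq, y') by rewrite /cross /= pq y'y.
set S := (xp, y) |: ((xq, y') |: [set (x, g x) | x in between ltX xp xq]).
have card_S : #|S| = #|between ltX xp xq| + 2.
  have edge_inj : injective (fun x => (x, g x)) by move=> a b [].
  have q_out : (xq, y') \notin [set (x, g x) | x in between ltX xp xq].
    apply/imsetP => [[x]]; rewrite inE => /andP[_ xq'] [eq_x _].
    by move: xq'; rewrite -eq_x ltX_irr.
  have p_out :
      (xp, y) \notin (xq, y') |: [set (x, g x) | x in between ltX xp xq].
    rewrite !inE negb_or xpair_eqE; apply/andP; split.
      by apply: contraTN pq => /andP[/eqP-> _]; rewrite ltX_irr.
    apply/imsetP => [[x]]; rewrite inE => /andP[px _] [eq_x _].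
    by move: px; rewrite -eq_x ltX_irr.
  by rewrite !cardsU1 p_out q_out card_imset // addnA addnC.
have S_sub :
    S \subset crossings E ltX ltY (xp, y) :|: crossings E ltX ltY (xq, y').
  apply/subsetP => e; rewrite !inE => /orP[/eqP -> | /orP[/eqP -> |]].
  - by rewrite eE -crossC ef orbT.
  - by rewrite fE ef.
  case/imsetP => x; rewrite inE => /andP[px xq'] ->.
  by rewrite gE /= cross_between.
by rewrite -card_S; apply: leq_trans (subset_leq_card S_sub) (leq_card_setU _ _).
Qed.

End Crossings.

Theorem lemma3p4 (k : nat) (X Y : finType) (E : {set X * Y}) (ltX : rel X)
    (ltY : rel Y) (xp xq : X) (y y' : Y) :
  no_isolated E ->
  strict_linear_order ltX ->
  (xp, y) \in E -> (xq, y') \in E -> (xp, y) != (xq, y') ->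
  pos ltX xp + 2 * k < pos ltX xq ->
  kplanar_drawing E ltX ltY k ->
  ltY y y' || (y == y').
Proof.
(* The edges are distinct anyway, since x_p <_X x_q. *)
move=> [edgeX _] ltX_order eE fE _ lt_pos [_ [ltY_order planar]].
have pq : ltX xp xq by apply: (lt_of_pos_lt ltX_order); lia.
apply/negPn/negP; rewrite negb_or => /andP[nyy' neq].
have y'y := strict_linear_order_lt_total ltY_order nyy' neq.
have := crossings_between ltX_order.1 ltY_order edgeX eE fE pq y'y.
have := pos_le_between ltX_order xp xq.
have := planar _ eE; have := planar _ fE.
rewrite /crossings; lia.
Qed.
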